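(* Let $e,c,h\in\omega^\omega$ with $e$ nondecreasing and unbounded and $c(n)\ge1$ for all $n$. Let $\langle I_n:n\in\omega\rangle$ be the partition of $\omega$ into consecutive intervals with $|I_n|=h(n)$, and define $g_{c,h}\in\omega^\omega$ by $g_{c,h}(k)=\lfloor\log_2c(n)\rfloor$ whenever $k\in I_n$. Suppose $e(g_{c,h}(n))\ge2\log_2n$ for all $n\ge1$. Then $\mathfrak{v}^\exists_{c,h}\le\operatorname{non}(\mathcal{N}^{e^*})$ and $\operatorname{cov}(\mathcal{N}^{e^*})\le\mathfrak{c}^\exists_{c,h}$.
   Context: $2^\omega$ carries the metric $d(x,y)=2^{-\min\{n:x(n)\neq y(n)\}}$ for $x\neq y$ and $d(x,x)=0$. A gauge function is a nondecreasing $f\colon[0,\infty)\to[0,\infty)$ with $f(0)=0$, $\lim_{x\to0}f(x)=0$; $\mathcal{H}^f(A)=\lim_{\delta\to0}\inf\{\sum_nf(\operatorname{diam}C_n):A\subseteq\bigcup_nC_n,\ \operatorname{diam}C_n\le\delta\}$ and $\mathcal{N}^f=\{A\subseteq2^\omega:\mathcal{H}^f(A)=0\}$. For nondecreasing unbounded $e\in\omega^\omega$, $e^*$ is the gauge function with $e^*(0)=0$, $e^*(2^{-k})=2^{-e(k)}$ for all $k\in\omega$, linear on each interval $[2^{-k-1},2^{-k}]$ (and constant on $[1,\infty)$). For $c,h\in\omega^\omega$: $\prod c=\prod_n c(n)$ (each $c(n)=\{0,\dots,c(n)-1\}$), $S(c,h)=\prod_n[c(n)]^{\le h(n)}$ (sequences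 $\phi$ with $\phi(n)\subseteq c(n)$, $|\phi(n)|\le h(n)$), and $x\in^\infty\phi$ iff $x(n)\in\phi(n)$ for infinitely many $n$. $\mathfrak{c}^\exists_{c,h}$ is the least size of $\Phi\subseteq S(c,h)$ such that every $x\in\prod c$ satisfies $x\in^\infty\phi$ for some $\phi\in\Phi$; $\mathfrak{v}^\exists_{c,h}$ is the least size of $F\subseteq\prod c$ such that for every $\phi\in S(c,h)$ some $x\in F$ fails $x\in^\infty\phi$. $\operatorname{cov}(I)$ is the least size of a subfamily of $I$ covering $2^\omega$, $\operatorname{non}(I)$ the least size of a subset of $2^\omega$ not in $I$. *)

From HB Require Import structures.
From mathcomp Require Import all_boot all_order all_algebra.
From mathcomp Require Import all_classical all_reals all_analysis.
Set Implicit Arguments. Unset Strict Implicit. Unset Printing Implicit Defensive.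
Import Order.TTheory GRing.Theory Num.Theory.
Import numFieldNormedType.Exports.
Local Open Scope classical_set_scope.
Local Open Scope ring_scope.

Definition cantor := nat -> bool.

Section Hausdorff.
Variable R : realType.

Definition cdist (x y : cantor) : R :=
  match pselect (exists n, x n != y n) with
  | left H => (2%:R ^- (ex_minn H))
  | right _ => 0
  end.

(* diameter; sup of the empty set is 0 *)
Definition cdiam (C : set cantor) : R :=
  sup [set r | exists x y, C x /\ C y /\ r = cdist x y].

Definition hausdorff_delta (f : R -> R) (delta : R) (A : set cantor) : \bar R :=
  ereal_inf [set (\sum_(0 <= n <oo) (f (cdiam (C n)))%:E)%E |
               C in [set C : nat -> set cantor |
                      A `<=` \bigcup_n C n /\ forall n, cdiam (C n) <= delta]].

Definition hausdorff (f : R -> R) (A : set cantor) : \bar R :=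
  lim (hausdorff_delta f delta A @[delta --> 0^'+]).

Definition hnull (f : R -> R) (A : set cantor) : Prop := hausdorff f A = 0%E.

(* the index k with 2^{-k-1} < t <= 2^{-k} (for 0 < t < 1) *)
Definition dyadic_index (t : R) : nat :=
  match pselect (exists k, (2%:R ^- k.+1 < t)) with
  | left H => ex_minn H
  | right _ => 0%N
  end.

(* e^*: e^*(0)=0, e^*(2^{-k}) = 2^{-e(k)}, linear on [2^{-k-1},2^{-k}],
   constant on [1,oo) *)
Definition estar (e : nat -> nat) (t : R) : R :=
  if t <= 0 then 0
  else if 1 <= t then 2%:R ^- e 0%N
  else let k := dyadic_index t in
       2%:R ^- e k.+1
       + (t - 2%:R ^- k.+1) / (2%:R ^- k.+1) * (2%:R ^- e k - 2%:R ^- e k.+1).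

End Hausdorff.

Definition prodc (c : nat -> nat) := forall n, 'I_(c n).
Definition slalom (c : nat -> nat) := forall n, {set 'I_(c n)}.
Definition in_S (c h : nat -> nat) (phi : slalom c) : Prop :=
  forall n, (#|phi n| <= h n)%N.
Definition inf_often_in (c : nat -> nat) (x : prodc c) (phi : slalom c) : Prop :=
  forall m, exists n, (m <= n)%N /\ x n \in phi n.

(* intervals I_n = [sum_{i<n} h i, sum_{i<=n} h i) ; block_of h k = n with k in I_n *)
Definition block_of (h : nat -> nat) (k : nat) : nat :=
  match pselect (exists n, k < \sum_(i < n.+1) h i)%N with
  | left H => ex_minn H
  | right _ => 0%N
  end.
Definition gch (c h : nat -> nat) (k : nat) : nat := trunc_log 2 (c (block_of h k)).

From HB Require Import structures.
From mathcomp Require Import all_boot all_order all_algebra.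
From mathcomp Require Import all_classical all_reals all_analysis.
From mathcomp Require Import ring lra.
Import Order.TTheory GRing.Theory Num.Theory.
Local Open Scope classical_set_scope.
Local Open Scope ring_scope.

(* Let F z n in c(n) code the first floor(log2 c(n)) bits of z.  Given phi in
   S(c,h), attach the at most h(n) elements of phi n to distinct points of the
   block I_n; the point k then carries a cylinder of length g_{c,h}(k), whose
   e^*-weight 2^-e(g_{c,h}(k)) is at most 1/k^2 by the growth hypothesis.  If
   F z is infinitely often in phi, z lies in infinitely many of these
   cylinders, so for every K the cylinders of index >= K cover it, with total
   weight <= 1/(K-1).  Hence {z | F z in^oo phi} is e^*-null: F witnesses the
   first inequality, and these null sets for phi in Phi witness the second. *)

Section PowersOfTwo.
Variable R : realType.
Implicit Types (m n : nat) (t : R).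

Lemma expr2N_natE n : (2%:R : R) ^- n = (2 ^ n)%:R^-1.
Proof. by rewrite natrX. Qed.

Lemma expr2N_gt0 n : 0 < (2%:R : R) ^- n.
Proof. by rewrite invr_gt0 exprn_gt0. Qed.

Lemma ltr_expr2N m n : ((2%:R : R) ^- m < 2%:R ^- n) = (n < m)%N.
Proof.
by rewrite !expr2N_natE ltf_pV2 ?ltr_nat ?ltn_exp2l // posrE ltr0n expn_gt0.
Qed.

Lemma ler_expr2N m n : ((2%:R : R) ^- m <= 2%:R ^- n) = (n <= m)%N.
Proof.
by rewrite !expr2N_natE lef_pV2 ?ler_nat ?leq_exp2l // posrE ltr0n expn_gt0.
Qed.

Lemma expr2N_lt {t} : 0 < t -> exists n, (2%:R : R) ^- n < t.
Proof.
move=> t0; exists (Num.Def.archi_bound t^-1).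
rewrite -[X in _ < X]invrK expr2N_natE ltf_pV2 ?posrE ?invr_gt0 ?ltr0n ?expn_gt0 //.
apply: (lt_le_trans (archi_boundP _)); first by rewrite invr_ge0 ltW.
by rewrite ler_nat ltnW // ltn_expl.
Qed.

Lemma dyadic_indexP t : 0 < t -> (2%:R : R) ^- (dyadic_index t).+1 < t.
Proof.
move=> t0; rewrite /dyadic_index; case: pselect => [H|[]]; first by case: ex_minnP.
have [n ltnt] := expr2N_lt t0; exists n.
by apply: lt_trans ltnt; rewrite ltr_expr2N.
Qed.

Lemma dyadic_index_expr2N m : dyadic_index ((2%:R : R) ^- m) = m.
Proof.
rewrite /dyadic_index; case: pselect => [H|[]]; last by exists m; rewrite ltr_expr2N.
case: ex_minnP => k; rewrite ltr_expr2N => ltmk min_k.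
by apply/anti_leq; rewrite min_k ?ltr_expr2N.
Qed.

End PowersOfTwo.

Section Gauge.
Variables (R : realType) (e : nat -> nat).

Lemma estar0 : estar e (0 : R) = 0.
Proof. by rewrite /estar lexx. Qed.

Lemma estar_expr2N m : estar e ((2%:R : R) ^- m) = 2%:R ^- e m.
Proof.
rewrite /estar leNgt expr2N_gt0 /=; case: m => [|m]; first by rewrite expr0 invr1 lexx.
have /negbTE -> : ~~ (1 <= (2%:R : R) ^- m.+1).
  by rewrite -ltNge -[X in _ < X]invr1 -(expr0 2%:R) ltr_expr2N.
rewrite dyadic_index_expr2N.
have -> : (2%:R : R) ^- m.+1 = 2 * 2%:R ^- m.+2.
  by rewrite [in RHS]exprS invfM mulrA divff ?mul1r // pnatr_eq0.
have : (2%:R : R) ^- m.+2 != 0 by rewrite gt_eqF // expr2N_gt0.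
set a := (2%:R : R) ^- m.+2 => a_neq0.
have -> : (2 * a - a) / a = 1 by rewrite -{2}(mul1r a) -mulrBl mulrK ?unitfE //; lra.
by rewrite mul1r addrC subrK.
Qed.

Lemma estar_ge0 : {homo e : m n / (m <= n)%N} -> forall t : R, 0 <= estar e t.
Proof.
move=> e_homo t; rewrite /estar; case: ifPn => // t_gt0; rewrite -ltNge in t_gt0.
case: ifP => _; first exact/ltW/expr2N_gt0.
apply: addr_ge0; first exact/ltW/expr2N_gt0.
by rewrite mulr_ge0 ?divr_ge0 ?subr_ge0 ?ler_expr2N ?e_homo ?ltW ?expr2N_gt0
  ?dyadic_indexP.
Qed.

End Gauge.

Definition flip_bit (z : cantor) (m : nat) : cantor :=
  fun i => if i == m then ~~ z i else z i.

Section CantorMetric.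
Variable R : realType.

Lemma cdist_le_agree (x y : cantor) (m : nat) :
  (forall i, (i < m)%N -> x i = y i) -> cdist R x y <= 2%:R ^- m.
Proof.
move=> xy; rewrite /cdist; case: pselect => [H|_]; last exact/ltW/expr2N_gt0.
case: ex_minnP => k xyk _; rewrite ler_expr2N leqNgt.
by apply: contraNN xyk => /xy ->.
Qed.

Lemma cdist_flip_bit (x : cantor) (m : nat) : cdist R x (flip_bit x m) = 2%:R ^- m.
Proof.
rewrite /cdist; case: pselect => [H|[]]; last first.
  by exists m; rewrite /flip_bit eqxx; case: (x m).
case: ex_minnP => k; rewrite /flip_bit; case: (k =P m) => [-> //|_]; by rewrite eqxx.
Qed.

Lemma cdiam_cylinder (C : set cantor) (m : nat) :
  C !=set0 ->
  (forall x y, C x -> C y -> forall i, (i < m)%N -> x i = y i) ->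
  (forall x, C x -> C (flip_bit x m)) ->
  cdiam R C = 2%:R ^- m.
Proof.
move=> [x0 Cx0] agree flipC; apply/eqP; rewrite eq_le; apply/andP; split.
  apply: ge_sup; first by exists (cdist R x0 x0), x0, x0.
  by move=> r [x [y [Cx [Cy ->]]]]; apply/cdist_le_agree/agree.
apply: ub_le_sup.
  by exists (2%:R ^- m) => r [x [y [Cx [Cy ->]]]]; apply/cdist_le_agree/agree.
exists x0, (flip_bit x0 m); rewrite cdist_flip_bit.
by split=> //; split; first exact: flipC.
Qed.

Lemma cdiam_set0 : cdiam R set0 = 0.
Proof. by rewrite /cdiam (_ : [set r | _] = set0) ?sup0 // -subset0 => r [x [y []]]. Qed.

Lemma hnull_of_covers (f : R -> R) (A : set cantor) :
  (forall t, 0 <= f t) ->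
  (forall d eps : R, 0 < d -> 0 < eps ->
    exists C : nat -> set cantor,
      [/\ A `<=` \bigcup_n C n, forall n, cdiam R (C n) <= d
        & (\sum_(0 <= n <oo) (f (cdiam R (C n)))%:E <= eps%:E)%E]) ->
  hnull f A.
Proof.
move=> f_ge0 covers; have delta0 (d : R) : 0 < d -> hausdorff_delta f d A = 0%E.
  move=> d_gt0; apply/eqP; rewrite eq_le; apply/andP; split; last first.
    apply/ereal_infP => _ [C _ <-].
    by apply: nneseries_ge0 => n _ _; rewrite lee_fin.
  apply/lee_addgt0Pr => eps eps_gt0; rewrite add0e.
  have [C [AC Cd Csum]] := covers d eps d_gt0 eps_gt0.
  by apply: le_trans Csum; apply: ereal_inf_lbound; exists C.
apply: (lim_near_cst (@ereal_hausdorff R)).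
by apply: filterS (nbhs_right_gt (0 : R)) => d; apply: delta0.
Qed.

End CantorMetric.

Section InverseSquares.
Variable R : realType.

Lemma inv_sqS_le (m : nat) : (0 < m)%N ->
  ((m.+1%:R : R) ^+ 2)^-1 <= m%:R^-1 - m.+1%:R^-1.
Proof.
rewrite -(ltr_nat R) -subr_ge0 -[m.+1]addn1 natrD; set x : R := m%:R => x_gt0.
have -> : x^-1 - (x + 1%:R)^-1 - ((x + 1%:R) ^+ 2)^-1 = (x * (x + 1) ^+ 2)^-1.
  by field; apply/andP; split; apply/eqP; rewrite -/x; lra.
by rewrite invr_ge0 mulr_ge0 ?exprn_ge0 //; lra.
Qed.

Lemma sum_inv_sq_le (L N : nat) : (0 < L)%N ->
  \sum_(0 <= n < N) (((L + n).+1%:R : R) ^+ 2)^-1 <= L%:R^-1 - (L + N)%:R^-1.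
Proof.
move=> L_gt0; elim: N => [|N IH]; first by rewrite big_geq // addn0 subrr.
rewrite big_nat_recr //= addnS.
have := lerD IH (inv_sqS_le _ (ltn_addr N L_gt0)).
by rewrite addrA subrK.
Qed.

Lemma nneseries_inv_sq_le (L : nat) : (0 < L)%N ->
  (\sum_(0 <= n <oo) ((((L + n).+1%:R : R) ^+ 2)^-1)%:E <= (L%:R^-1)%:E)%E.
Proof.
move=> L_gt0; apply: lime_le.
  by apply: is_cvg_nneseries => n _ _; rewrite lee_fin invr_ge0 exprn_ge0.
apply: nearW => N; rewrite sumEFin lee_fin (le_trans (sum_inv_sq_le _ N L_gt0)) //.
by rewrite lerBlDr lerDl invr_ge0.
Qed.

End InverseSquares.

Lemma sq_le_exp2_of_log {R : realType} {k E : nat} : (0 < k)%N ->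
  2 * (ln (k%:R : R) / ln 2) <= E%:R -> (k ^ 2 <= 2 ^ E)%N.
Proof.
move=> k_gt0; rewrite mulrA ler_pdivrMr ?ln_gt0 ?ltr1n // => le_lnk.
rewrite -(ler_nat R) !natrX -ler_ln ?posrE ?exprn_gt0 ?ltr0n //.
by rewrite !lnXn ?ltr0n // -[_ *+ 2]mulr_natl -[_ *+ E]mulr_natl.
Qed.

Definition prefix_code (m : nat) (z : cantor) : 'I_#|{ffun 'I_m -> bool}| :=
  enum_rank [ffun i : 'I_m => z i].

Lemma prefix_code_eqP (m : nat) (z w : cantor) :
  prefix_code m z = prefix_code m w <-> forall i, (i < m)%N -> z i = w i.
Proof.
split=> [/enum_rank_inj/ffunP zw i lt_im | zw].
  by have := zw (Ordinal lt_im); rewrite !ffunE.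
by congr enum_rank; apply/ffunP => i; rewrite !ffunE zw.
Qed.

Section CantorCode.
Variables (c : nat -> nat) (c_gt0 : forall n, (0 < c n)%N).

Lemma card_prefix_code_le (n : nat) :
  (#|{ffun 'I_(trunc_log 2 (c n)) -> bool}| <= c n)%N.
Proof. by rewrite card_ffun card_bool card_ord trunc_logP. Qed.

Definition cantor_code (z : cantor) : prodc c :=
  fun n => widen_ord (card_prefix_code_le n) (prefix_code (trunc_log 2 (c n)) z).

Lemma cantor_code_eqP (z w : cantor) (n : nat) :
  cantor_code z n = cantor_code w n <->
  forall i, (i < trunc_log 2 (c n))%N -> z i = w i.
Proof.
rewrite -prefix_code_eqP; split=> [zw | zw]; apply: val_inj; last by rewrite /= zw.
exact: (congr1 val zw).
Qed.

End CantorCode.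
Arguments cantor_code {c}.

Section Blocks.
Variable h : nat -> nat.

Lemma leq_block_start {m n : nat} : (m <= n)%N ->
  (\sum_(i < m) h i <= \sum_(i < n) h i)%N.
Proof.
move=> le_mn; rewrite (big_ord_widen n h le_mn) big_mkcond.
by apply: leq_sum => i _; case: ifP.
Qed.

Lemma block_ofD (n j : nat) : (j < h n)%N -> block_of h (\sum_(i < n) h i + j) = n.
Proof.
move=> lt_jn; have in_n : (\sum_(i < n) h i + j < \sum_(i < n.+1) h i)%N.
  by rewrite big_ord_recr ltn_add2l.
rewrite /block_of; case: pselect => [H|[]]; last by exists n.
case: ex_minnP => k lt_k min_k; apply/anti_leq; rewrite min_k //= leqNgt.
apply: contraTN lt_k => lt_kn; rewrite -leqNgt.
exact: leq_trans (leq_block_start lt_kn) (leq_addr _ _).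
Qed.

End Blocks.

Section SlalomNull.
Variables (R : realType) (e c h : nat -> nat).
Hypothesis e_homo : {homo e : m n / (m <= n)%N}.
Hypothesis c_gt0 : forall n, (0 < c n)%N.
Hypothesis blocks_cover : forall k, exists n, (k < \sum_(i < n.+1) h i)%N.
Hypothesis sq_le_exp2_e : forall k, (0 < k)%N -> (k ^ 2 <= 2 ^ e (gch c h k))%N.
Variable phi : slalom c.
Hypothesis phi_in_S : in_S h phi.

Local Notation F := (cantor_code c_gt0).

Definition slalom_piece (k : nat) : set cantor :=
  let n := block_of h k in
  [set z | F z n \in phi n /\ index (F z n) (enum (phi n)) = (k - \sum_(i < n) h i)%N].

Lemma slalom_piece_agree (k : nat) (z w : cantor) :
  slalom_piece k z -> slalom_piece k w -> forall i, (i < gch c h k)%N -> z i = w i.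
Proof.
move=> [+ zk] [+ wk]; rewrite -mem_enum => zin; rewrite -mem_enum => win.
apply/cantor_code_eqP.
by rewrite -(nth_index (F z _) zin) zk -wk nth_index.
Qed.

Lemma slalom_piece_flip (k : nat) (z : cantor) :
  slalom_piece k z -> slalom_piece k (flip_bit z (gch c h k)).
Proof.
rewrite /slalom_piece /= (_ : F (flip_bit z _) _ = F z _) //.
by apply/cantor_code_eqP => i lt_ik; rewrite /flip_bit ltn_eqF.
Qed.

Lemma cdiam_slalom_piece (k : nat) :
  cdiam R (slalom_piece k) = 0 \/ cdiam R (slalom_piece k) = 2%:R ^- gch c h k.
Proof.
have [->|/set0P ne] := eqVneq (slalom_piece k) set0; first by left; exact: cdiam_set0.
right; apply: cdiam_cylinder ne _ _.
  exact: slalom_piece_agree.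
exact: slalom_piece_flip.
Qed.

Lemma estar_cdiam_slalom_piece (k : nat) : (0 < k)%N ->
  estar e (cdiam R (slalom_piece k)) <= ((k%:R : R) ^+ 2)^-1.
Proof.
move=> k_gt0; have [->|->] := cdiam_slalom_piece k.
  by rewrite estar0 invr_ge0 exprn_ge0.
rewrite estar_expr2N expr2N_natE lef_pV2 ?posrE ?exprn_gt0 ?ltr0n ?expn_gt0 //.
by rewrite -natrX ler_nat sq_le_exp2_e.
Qed.

Lemma leq_gch (M k : nat) : (2 ^ e M < k)%N -> (M <= gch c h k)%N.
Proof.
move=> lt_k; have k_gt0 : (0 < k)%N := leq_ltn_trans (leq0n _) lt_k.
rewrite leqNgt; apply: contraTN lt_k => /ltnW/e_homo le_e.
rewrite -leqNgt (leq_trans (leq_pmulr k k_gt0)) // mulnn.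
by rewrite (leq_trans (sq_le_exp2_e _ k_gt0)) // leq_exp2l.
Qed.

Lemma cdiam_slalom_piece_le (M k : nat) : (2 ^ e M < k)%N ->
  cdiam R (slalom_piece k) <= 2%:R ^- M.
Proof.
move=> /leq_gch; rewrite -(ler_expr2N R) => le_M.
by have [->|->] := cdiam_slalom_piece k; first exact/ltW/expr2N_gt0.
Qed.

Lemma slalom_piece_cover {z : cantor} {n : nat} : F z n \in phi n ->
  slalom_piece (\sum_(i < n) h i + index (F z n) (enum (phi n))) z.
Proof.
move=> zn; have lt_idx : (index (F z n) (enum (phi n)) < h n)%N.
  by apply: leq_trans (phi_in_S n); rewrite cardE index_mem mem_enum.
by rewrite /slalom_piece /= block_ofD // addKn.
Qed.

Lemma hnull_inf_often_in (A : set cantor) :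
  A `<=` [set z | inf_often_in (F z) phi] -> hnull (@estar R e) A.
Proof.
move=> sA; apply: hnull_of_covers => [t|d eps d_gt0 eps_gt0]; first exact: estar_ge0.
have [M ltMd] := expr2N_lt R d_gt0; have [p ltp_eps] := expr2N_lt R eps_gt0.
pose L := (2 ^ maxn (e M) p)%N; have L_gt0 : (0 < L)%N by rewrite expn_gt0.
exists (fun n => slalom_piece (L + n).+1); split.
- move=> z /sA io_z; have [n0 ltLn0] := blocks_cover L.
  have [n [lt_n0n zn]] := io_z n0.+1; have := slalom_piece_cover zn.
  set k := (_ + _)%N => zk; have lt_Lk : (L < k)%N.
    exact: leq_trans ltLn0 (leq_trans (leq_block_start h lt_n0n) (leq_addr _ _)).
  by exists (k - L.+1)%N => //; rewrite -addSn subnKC.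
- move=> n; apply: le_trans (ltW ltMd); apply: cdiam_slalom_piece_le.
  by rewrite ltnS (leq_trans _ (leq_addr n L)) // leq_exp2l ?leq_maxl.
- apply: le_trans (le_trans (nneseries_inv_sq_le R L L_gt0) _).
    apply: lee_nneseries => n *; rewrite lee_fin ?estar_ge0 //.
    exact: estar_cdiam_slalom_piece.
  rewrite lee_fin (le_trans _ (ltW ltp_eps)) // /L -expr2N_natE.
  by rewrite ler_expr2N leq_maxr.
Qed.

End SlalomNull.

Theorem lemma3p4 (R : realType) (e c h : nat -> nat) :
  {homo e : m n / (m <= n)%N} ->
  (forall M, exists n, (M <= e n)%N) ->
  (forall n, (1 <= c n)%N) ->
  (* the intervals I_n (|I_n| = h n) partition omega *)
  (forall k, exists n, (k < \sum_(i < n.+1) h i)%N) ->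
  (forall n, (1 <= n)%N ->
     2 * (ln (n%:R : R) / ln 2) <= (e (gch c h n))%:R) ->
  (* v^exists_{c,h} <= non(N^{e^*}) *)
  (forall Y : set cantor, ~ hnull (@estar R e) Y ->
     exists F : cantor -> prodc c,
       forall phi : slalom c, in_S h phi ->
         exists y, Y y /\ ~ inf_often_in (F y) phi) /\
  (* cov(N^{e^*}) <= c^exists_{c,h} *)
  (forall Phi : set (slalom c),
     (forall phi, Phi phi -> in_S h phi) ->
     (forall x : prodc c, exists phi, Phi phi /\ inf_often_in x phi) ->
     exists N : slalom c -> set cantor,
       (forall phi, Phi phi -> hnull (@estar R e) (N phi)) /\
       (forall z : cantor, exists phi, Phi phi /\ N phi z)).
Proof.
(* Unboundedness of e only makes e^* a gauge function; the argument does not need it. *)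
move=> e_homo _ c_gt0 blocks_cover log_bound.
have sq_le k (k_gt0 : (0 < k)%N) := sq_le_exp2_of_log k_gt0 (log_bound k k_gt0).
have null := @hnull_inf_often_in R e c h e_homo c_gt0 blocks_cover sq_le.
split=> [Y Y_non_null | Phi Phi_in_S Phi_covers].
  exists (cantor_code c_gt0) => phi phi_in_S; apply: contrapT => no_y.
  apply/Y_non_null/(null phi phi_in_S) => y Yy; apply: contrapT => not_io.
  by apply: no_y; exists y.
exists (fun phi => [set z | inf_often_in (cantor_code c_gt0 z) phi]); split.
  by move=> phi /Phi_in_S /null; apply.
by move=> z; have [phi [Phi_phi io_z]] := Phi_covers (cantor_code c_gt0 z); exists phi.
Qed.
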